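(* For every $w\in F$, the edge $e_0(w)$ is a good edge.
   Context: $F$ is Thompson's group with generators $x_0,x_1$ and $X^1$ its Cayley graph with respect to $\{x_0^{\pm1},x_1^{\pm1}\}$. Elements are represented by reduced tree pair diagrams $(T_-(w),T_+(w))$ of finite rooted binary trees with equally many carets (caret: vertex with its two downward edges), carets numbered in infix order from 1. A caret is a right (left) caret if one of its edges lies on the right (left) side of the tree; the root is both; others are interior. Nested traversal word $\gamma(T)$: go through carets of $T$ in infix order, skipping carets in the right subtree of a caret to which rule (3) or (5) has been applied, appending (1) nothing for caret 1; (2) $x_0^{-1}$ for a left caret numbered $>1$; (3) $x_0^{-1}\gamma(T')x_0x_1^{-1}$ for an interior caret with nonempty right subtree $T'$ (as a tree on its own); (4) $x_1^{-1}$ for an interior caret with empty right subtree; (5) $x_0^{-1}\gamma(T')x_0$ for a non-root right caret whose right subtree $T'$ contains an interior caret; (6) nothing for a non-root right caret whose right subtree has no interior caret. The nested traversal normal form $\eta(w)$ is the free reduction of $\gamma(T_+(w))^{-1}\gamma(T_-(w))$, and $\Psi_w$ is the path in $X^1$ from the identity to $w$ labelled $\eta(w)$. For $a\in\{0,1\}$, $e_a(w)$ is the edge with endpoints $w$ and $wx_a^{-1}$; it is good if the loop $\Psi_w\,e_a(w)\,\Psi_{wx_a^{-1}}^{-1}$ is null-homotopic in $X^1$. *)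

From Stdlib Require Import List Arith Bool Relations.
Import ListNotations.

Inductive tree : Type := Lf | Nd (l r : tree).

Fixpoint carets (t : tree) : nat :=
  match t with Lf => 0 | Nd a b => S (carets a + carets b) end.

Fixpoint leaves (t : tree) : nat :=
  match t with Lf => 1 | Nd a b => leaves a + leaves b end.

Definition treepair := (tree * tree)%type.

(* leaf indices i (from base) such that leaves i, i+1 form a caret (exposed caret) *)
Fixpoint exposed (t : tree) (base : nat) : list nat :=
  match t with
  | Lf => []
  | Nd Lf Lf => [base]
  | Nd a b => exposed a base ++ exposed b (base + leaves a)
  end.

Fixpoint contract (t : tree) (i base : nat) : tree :=
  match t with
  | Lf => Lf
  | Nd Lf Lf => if Nat.eqb base i then Lf else t
  | Nd a b => Nd (contract a i base) (contract b i (base + leaves a))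
  end.

Definition common_caret (p : treepair) : option nat :=
  let e2 := exposed (snd p) 0 in
  find (fun i => existsb (Nat.eqb i) e2) (exposed (fst p) 0).

Definition is_reduced (p : treepair) : bool :=
  match common_caret p with None => true | Some _ => false end.

Fixpoint reduce_fuel (fuel : nat) (p : treepair) : treepair :=
  match fuel with
  | 0 => p
  | S f => match common_caret p with
           | None => p
           | Some i => reduce_fuel f (contract (fst p) i 0, contract (snd p) i 0)
           end
  end.

Definition reduce (p : treepair) : treepair := reduce_fuel (carets (fst p)) p.

(* a reduced tree pair diagram: the canonical representative of an element of F *)
Definition is_elt (p : treepair) : Prop :=
  carets (fst p) = carets (snd p) /\ is_reduced p = true.

Fixpoint join (s t : tree) : tree :=
  match s, t with
  | Lf, _ => t
  | _, Lf => s
  | Nd a b, Nd c d => Nd (join a c) (join b d)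
  end.

(* for s a subtree of u (sharing the root): the subtrees of u hanging at the
   leaves of s, in left-to-right order *)
Fixpoint diff (s u : tree) : list tree :=
  match s, u with
  | Lf, _ => [u]
  | Nd _ _, Lf => []
  | Nd a b, Nd c d => diff a c ++ diff b d
  end.

Fixpoint graft (t : tree) (l : list tree) : tree * list tree :=
  match t with
  | Lf => match l with [] => (Lf, []) | s :: l' => (s, l') end
  | Nd a b => let (a', l1) := graft a l in
              let (b', l2) := graft b l1 in (Nd a' b', l2)
  end.

(* The diagram (T_-, T_+) is the PL map sending the i-th leaf interval of T_-
   onto the i-th leaf interval of T_+; the product a * b is the composite
   "first b, then a".  With the generators below this is the convention in which the path
   labelled eta(w) from 1 ends at w (as the paper requires). *)
Definition mul (a b : treepair) : treepair :=
  let U := join (snd b) (fst a) in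
  reduce (fst (graft (fst b) (diff (snd b) U)),
          fst (graft (snd a) (diff (fst a) U))).

Definition one : treepair := (Lf, Lf).

Inductive gen : Type := g0 | g1.

(* a letter (g, true) is x_g, and (g, false) is x_g^{-1} *)
Definition letter := (gen * bool)%type.

Definition gen_eqb (a b : gen) : bool :=
  match a, b with g0, g0 | g1, g1 => true | _, _ => false end.

Definition letter_inv (l : letter) : letter := (fst l, negb (snd l)).
Definition letter_eqb (l m : letter) : bool :=
  gen_eqb (fst l) (fst m) && Bool.eqb (snd l) (snd m).

Definition gen_elt (g : gen) : treepair :=
  match g with
  | g0 => (Nd Lf (Nd Lf Lf), Nd (Nd Lf Lf) Lf)
  | g1 => (Nd Lf (Nd Lf (Nd Lf Lf)), Nd Lf (Nd (Nd Lf Lf) Lf))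
  end.

Definition letter_elt (l : letter) : treepair :=
  if snd l then gen_elt (fst l) else let (m, p) := gen_elt (fst l) in (p, m).

Definition word := list letter.

Definition inv_word (w : word) : word := rev (map letter_inv w).

Definition fred_step (acc : word) (x : letter) : word :=
  match acc with
  | y :: acc' => if letter_eqb y (letter_inv x) then acc' else x :: acc
  | [] => [x]
  end.
Definition free_reduce (w : word) : word := rev (fold_left fred_step w []).

Definition x0 : letter := (g0, true).
Definition x0i : letter := (g0, false).
Definition x1i : letter := (g1, false).

(* Carets of a subtree all of whose carets are interior carets of T, traversed
   in infix order: rule (4) for an interior caret with empty right subtree,
   rule (3) for one with nonempty right subtree T' (whose carets are then
   skipped by the outer traversal and traversed inside the conjugate). *)
Fixpoint trav_int (t : tree) : word :=
  match t with
  | Lf => []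
  | Nd a b =>
      trav_int a ++
      match b with
      | Lf => [x1i]
      | _ => [x0i] ++ trav_int b ++ [x0; x1i]
      end
  end.

(* does a subtree hanging on the right side of T contain an interior caret? *)
Fixpoint has_interior_R (t : tree) : bool :=
  match t with
  | Lf => false
  | Nd Lf b => has_interior_R b
  | Nd _ _ => true
  end.

(* a subtree whose root is a non-root right caret of T (its right-spine carets
   are right carets of T, all other carets interior) *)
Fixpoint trav_right (t : tree) : word :=
  match t with
  | Lf => []
  | Nd a b =>
      trav_int a ++
      (if has_interior_R b
       then [x0i] ++ trav_right b ++ [x0]
       else [])                                (* rule (6); b then has only right carets, all rule (6) *)
  end.

(* a subtree whose root is a non-root left caret of T (left-spine carets are
   left carets of T, all other carets interior) *)
Fixpoint trav_left (t : tree) : word :=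
  match t with
  | Lf => []
  | Nd a b =>
      trav_left a ++
      (match a with Lf => [] | _ => [x0i] end) ++
      trav_int b
  end.

Definition gamma (t : tree) : word :=
  match t with
  | Lf => []
  | Nd a b =>
      trav_left a ++
      (match a with Lf => [] | _ => [x0i] end) ++
      trav_right b
  end.

Definition eta (w : treepair) : word :=
  free_reduce (inv_word (gamma (snd w)) ++ gamma (fst w)).

Definition adj (u v : treepair) : Prop := exists l : letter, v = mul u (letter_elt l).

Fixpoint walk (v : treepair) (w : word) : list treepair :=
  v :: match w with [] => [] | l :: w' => walk (mul v (letter_elt l)) w' end.

Definition Psi (w : treepair) : list treepair := walk one (eta w).

(* elementary homotopy of edge paths (given by vertex sequences; X^1 has no
   multiple edges): deleting/inserting a backtrack u - v - u *)
Definition backtrack (p q : list treepair) : Prop :=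
  exists l1 l2 u v, adj u v /\ p = l1 ++ u :: v :: u :: l2 /\ q = l1 ++ u :: l2.

(* a loop based at its first vertex is null-homotopic in X^1 iff it is
   (combinatorially) homotopic rel basepoint to the constant path *)
Definition nullhomotopic (p : list treepair) : Prop :=
  clos_refl_sym_trans _ backtrack p [hd one p].

(* e_a(w) joins w and w x_a^{-1}; it is good iff Psi_w e_a(w) Psi_{w x_a^{-1}}^{-1}
   is a null-homotopic loop (the first two conjuncts say the paths end where
   they must, so that this concatenation is the loop in question). *)
Definition good_edge (w : treepair) (a : gen) : Prop :=
  let w' := mul w (letter_elt (a, false)) in
  last (Psi w) one = w /\ last (Psi w') one = w' /\
  nullhomotopic (Psi w ++ rev (Psi w')).

(* Elements of F act on Cantor space by prefix replacements, and a reduced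
   diagram is determined by its action: its domain tree is the coarsest tree on
   whose leaf cylinders the action is a prefix replacement.  Read as rotations
   of the domain tree, gamma(T) turns the right vine into T, so eta(w)
   evaluates to w and Psi_w ends at w.  The loop through e_0(w) is the walk
   along eta(w) x0^-1 followed by the walk back along eta(w x0^-1); a case
   analysis on the shape of T_-(w) shows that eta(w x0^-1) is the free
   reduction of eta(w) x0^-1, so the two walks differ only by backtracks. *)

From Stdlib Require Import List Arith Relations Lia FunctionalExtensionality.
Import ListNotations.

(** * Tree pair diagrams act on Cantor space *)

Definition stream := nat -> bool.
Definition scons (b : bool) (s : stream) : stream :=
  fun n => match n with 0 => b | S k => s k end.
Definition stl (s : stream) : stream := fun n => s (S n).

Lemma stl_scons b s : stl (scons b s) = s.
Proof. reflexivity. Qed.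

Lemma scons_eta s : scons (s 0) (stl s) = s.
Proof. apply functional_extensionality; intros [|n]; reflexivity. Qed.

Lemma scons_inj b c s t : scons b s = scons c t -> b = c /\ s = t.
Proof.
  intro H. split; [exact (f_equal (fun f => f 0) H)|].
  apply functional_extensionality; intro n. exact (f_equal (fun f => f (S n)) H).
Qed.

Lemma scons_fun_inj b c (f g : stream -> stream) :
  (forall s, scons b (f s) = scons c (g s)) -> b = c /\ forall s, f s = g s.
Proof.
  intro H. split; [apply (scons_inj _ _ _ _ (H (fun _ => true)))|].
  intro s. apply (scons_inj _ _ _ _ (H s)).
Qed.

Lemma stream_expand3 (s : stream) :
  s = scons (s 0) (scons (s 1) (scons (s 2) (stl (stl (stl s))))).
Proof. apply functional_extensionality; intros [|[|[|n]]]; reflexivity. Qed.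

(* [locate t s] is the index of the leaf of [t] whose cylinder contains [s],
   together with the rest of [s]; [place t i] is the inverse. *)
Fixpoint locate (t : tree) (s : stream) : nat * stream :=
  match t with
  | Lf => (0, s)
  | Nd a b => if s 0 then (leaves a + fst (locate b (stl s)), snd (locate b (stl s)))
              else locate a (stl s)
  end.

Fixpoint place (t : tree) (i : nat) (r : stream) : stream :=
  match t with
  | Lf => r
  | Nd a b => if i <? leaves a then scons false (place a i r)
              else scons true (place b (i - leaves a) r)
  end.

Definition tp_map (p : treepair) (s : stream) : stream :=
  place (snd p) (fst (locate (fst p) s)) (snd (locate (fst p) s)).

Definition balanced (p : treepair) : Prop := leaves (fst p) = leaves (snd p).

Lemma leaves_pos t : 1 <= leaves t.
Proof. induction t; simpl; lia. Qed.

Lemma leaves_carets t : leaves t = S (carets t).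
Proof. induction t; simpl; lia. Qed.

Lemma leaves_one t : leaves t = 1 -> t = Lf.
Proof. destruct t as [|a b]; simpl; auto. pose proof (leaves_pos a); pose proof (leaves_pos b); lia. Qed.

Lemma leaves_two t : leaves t = 2 -> t = Nd Lf Lf.
Proof.
  destruct t as [|a b]; simpl; intro H; [lia|].
  pose proof (leaves_pos a); pose proof (leaves_pos b).
  rewrite (leaves_one a), (leaves_one b); auto; lia.
Qed.

Lemma is_elt_balanced p : is_elt p -> balanced p.
Proof. intros [H _]. unfold balanced. rewrite !leaves_carets. lia. Qed.

Lemma is_elt_intro p : balanced p -> is_reduced p = true -> is_elt p.
Proof. unfold balanced. rewrite !leaves_carets. split; [lia|auto]. Qed.

Lemma tree_eq_dec (a b : tree) : {a = b} + {a <> b}.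
Proof. decide equality. Defined.

Lemma place_Nd_lt a b i r : i < leaves a ->
  place (Nd a b) i r = scons false (place a i r).
Proof. intro H. simpl. apply Nat.ltb_lt in H. rewrite H. reflexivity. Qed.

Lemma place_Nd_ge a b i r : leaves a <= i ->
  place (Nd a b) i r = scons true (place b (i - leaves a) r).
Proof. intro H. simpl. apply Nat.ltb_ge in H. rewrite H. reflexivity. Qed.

Lemma locate_lt t s : fst (locate t s) < leaves t.
Proof.
  revert s; induction t as [|a IHa b IHb]; intro s; simpl; [lia|].
  destruct (s 0); simpl; [specialize (IHb (stl s))|specialize (IHa (stl s))]; lia.
Qed.

Lemma place_locate t s : place t (fst (locate t s)) (snd (locate t s)) = s.
Proof.
  revert s; induction t as [|a IHa b IHb]; intro s; [reflexivity|].
  cbn [locate]. destruct (s 0) eqn:E; cbn [fst snd].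
  - pose proof (locate_lt b (stl s)). rewrite place_Nd_ge by lia.
    replace (leaves a + fst (locate b (stl s)) - leaves a) with (fst (locate b (stl s))) by lia.
    rewrite IHb, <- E. apply scons_eta.
  - pose proof (locate_lt a (stl s)). rewrite place_Nd_lt by lia.
    rewrite IHa, <- E. apply scons_eta.
Qed.

Lemma locate_place t i r : i < leaves t -> locate t (place t i r) = (i, r).
Proof.
  revert i; induction t as [|a IHa b IHb]; intros i Hi; simpl in *; [f_equal; lia|].
  destruct (i <? leaves a) eqn:E; simpl.
  - apply Nat.ltb_lt in E. apply IHa; auto.
  - apply Nat.ltb_ge in E. rewrite stl_scons, IHb by lia. simpl. f_equal. lia.
Qed.

Lemma tp_map_comp X Y Z s : leaves X = leaves Y ->
  tp_map (Y, Z) (tp_map (X, Y) s) = tp_map (X, Z) s.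
Proof.
  intro H. unfold tp_map; simpl. rewrite locate_place; [reflexivity|].
  rewrite <- H. apply locate_lt.
Qed.

Definition swap (p : treepair) : treepair := (snd p, fst p).

Lemma tp_map_swap p s : balanced p -> tp_map p (tp_map (swap p) s) = s.
Proof.
  destruct p as [T S]. unfold balanced, tp_map, swap; simpl. intro H.
  rewrite locate_place; [apply place_locate|]. rewrite H. apply locate_lt.
Qed.

(** * Reduced diagrams are determined by their action *)

Fixpoint prepend (q : list bool) (s : stream) : stream :=
  match q with [] => s | b :: q' => scons b (prepend q' s) end.

Lemma prepend_app q q' s : prepend (q ++ q') s = prepend q (prepend q' s).
Proof. induction q; simpl; congruence. Qed.

Definition is_prepend (f : stream -> stream) : Prop := exists q, forall s, f s = prepend q s.

(* [t] is the coarsest tree such that [f] replaces a prefix on every leaf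
   cylinder of [t]: on no caret cylinder is [f] a prefix replacement. *)
Fixpoint domain_tree (f : stream -> stream) (t : tree) : Prop :=
  match t with
  | Lf => is_prepend f
  | Nd a b => ~ is_prepend f /\ domain_tree (fun s => f (scons false s)) a /\
              domain_tree (fun s => f (scons true s)) b
  end.

Lemma domain_tree_unique t t' f : domain_tree f t -> domain_tree f t' -> t = t'.
Proof.
  revert t' f; induction t as [|a IHa b IHb]; intros t' f H H';
    destruct t' as [|c d]; simpl in *; try tauto.
  destruct H as [_ [Ha Hb]], H' as [_ [Hc Hd]].
  f_equal; [eapply IHa | eapply IHb]; eauto.
Qed.

Lemma place_prepend T i : exists q, forall s, place T i s = prepend q s.
Proof.
  revert i; induction T as [|a IHa b IHb]; intro i; simpl; [exists []; auto|].
  destruct (i <? leaves a); [destruct (IHa i) as [q Hq]|destruct (IHb (i - leaves a)) as [q Hq]];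
    eexists (_ :: q); intro s; simpl; rewrite Hq; reflexivity.
Qed.

Lemma place_id_Lf c i : i < leaves c -> (forall s, place c i s = s) -> c = Lf.
Proof.
  intros Hi H. destruct c as [|a b]; auto. exfalso.
  destruct (Nat.lt_ge_cases i (leaves a)).
  - specialize (H (fun _ => true)). rewrite place_Nd_lt in H by auto.
    discriminate (f_equal (fun f => f 0) H).
  - specialize (H (fun _ => false)). rewrite place_Nd_ge in H by auto.
    discriminate (f_equal (fun f => f 0) H).
Qed.

Lemma exposed_Nd a b base : (a <> Lf \/ b <> Lf) ->
  exposed (Nd a b) base = exposed a base ++ exposed b (base + leaves a).
Proof. intros H. destruct a, b; try reflexivity. destruct H; congruence. Qed.

Lemma In_exposed_Nd X Y k i :
  In i (exposed X k) \/ In i (exposed Y (k + leaves X)) -> In i (exposed (Nd X Y) k).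
Proof.
  intro H. destruct (tree_eq_dec X Lf), (tree_eq_dec Y Lf); subst;
    [simpl in H; tauto| rewrite exposed_Nd by auto; apply in_or_app; auto ..].
Qed.

Lemma exposed_Nd_inv X Y k i : In i (exposed (Nd X Y) k) ->
  (X = Lf /\ Y = Lf /\ i = k) \/ In i (exposed X k) \/ In i (exposed Y (k + leaves X)).
Proof.
  intro H. destruct (tree_eq_dec X Lf), (tree_eq_dec Y Lf); subst;
    [simpl in H; destruct H as [->|[]]; auto
    | rewrite exposed_Nd in H by auto; apply in_app_or in H; tauto ..].
Qed.

Lemma exposed_bounds t base i : In i (exposed t base) -> base <= i /\ i + 2 <= base + leaves t.
Proof.
  revert base; induction t as [|a IHa b IHb]; intros base H; [simpl in H; tauto|].
  pose proof (leaves_pos a); pose proof (leaves_pos b).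
  apply exposed_Nd_inv in H. simpl.
  destruct H as [[-> [-> ->]]|[H|H]]; [simpl; lia|apply IHa in H|apply IHb in H]; lia.
Qed.

Lemma exposed_shift t k i : In i (exposed t k) -> In (S i) (exposed t (S k)).
Proof.
  revert k i; induction t as [|a IHa b IHb]; intros k i H; [simpl in H; tauto|].
  apply exposed_Nd_inv in H. destruct H as [[-> [-> ->]]|[H|H]]; [simpl; auto| |];
    apply In_exposed_Nd; [left; auto|right; apply IHb in H; auto].
Qed.

Lemma is_reduced_iff p :
  is_reduced p = true <-> forall i, In i (exposed (fst p) 0) -> ~ In i (exposed (snd p) 0).
Proof.
  unfold is_reduced, common_caret. split.
  - destruct (find _ _) eqn:E; [discriminate|]. intros _ i H1 H2.
    pose proof (find_none _ _ E i H1) as H. simpl in H.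
    rewrite (proj2 (existsb_exists _ _)) in H; [discriminate|].
    exists i. split; auto. apply Nat.eqb_refl.
  - intro H. destruct (find _ _) eqn:E; auto.
    apply find_some in E. destruct E as [H1 H2]. apply existsb_exists in H2.
    destruct H2 as [j [Hj E]]. apply Nat.eqb_eq in E. subst. exfalso. eapply H; eauto.
Qed.

Lemma sibling_leaves_exposed T k q base : S k < leaves T ->
  (forall s, place T k s = prepend q (scons false s)) ->
  (forall s, place T (S k) s = prepend q (scons true s)) ->
  In (base + k) (exposed T base).
Proof.
  revert k q base; induction T as [|c IHc d IHd]; intros k q base Hk H1 H2; simpl in Hk; [lia|].
  destruct (Nat.lt_ge_cases (S k) (leaves c)) as [Lt|Ge].
  - setoid_rewrite place_Nd_lt in H1; [|lia]. setoid_rewrite place_Nd_lt in H2; [|lia].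
    destruct q as [|x q]; cbn [prepend] in H1, H2.
    + destruct (scons_fun_inj _ _ _ _ H2); discriminate.
    + apply scons_fun_inj in H1 as [<- H1]. apply scons_fun_inj in H2 as [_ H2].
      apply In_exposed_Nd. left. apply (IHc k q); auto; lia.
  - destruct (Nat.lt_ge_cases k (leaves c)) as [Lt|Ge'].
    + assert (Ek : S k = leaves c) by lia.
      setoid_rewrite place_Nd_lt in H1; [|lia]. setoid_rewrite place_Nd_ge in H2; [|lia].
      rewrite <- Ek, Nat.sub_diag in H2.
      destruct q as [|x q]; cbn [prepend] in H1, H2.
      * apply scons_fun_inj in H1 as [_ H1]. apply scons_fun_inj in H2 as [_ H2].
        assert (c = Lf) by (apply (place_id_Lf c k); auto; lia).
        assert (d = Lf) by (apply (place_id_Lf d 0); auto; apply leaves_pos).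
        subst. simpl in Ek. replace k with 0 by lia. simpl. left; lia.
      * apply scons_fun_inj in H1 as [<- _]. destruct (scons_fun_inj _ _ _ _ H2). discriminate.
    + setoid_rewrite place_Nd_ge in H1; [|lia]. setoid_rewrite place_Nd_ge in H2; [|lia].
      destruct q as [|x q]; cbn [prepend] in H1, H2.
      * destruct (scons_fun_inj _ _ _ _ H1); discriminate.
      * apply scons_fun_inj in H1 as [<- H1]. apply scons_fun_inj in H2 as [_ H2].
        apply In_exposed_Nd. right. replace (base + k) with (base + leaves c + (k - leaves c)) by lia.
        apply (IHd _ q); [lia|exact H1|].
        intro s. rewrite <- H2. f_equal. lia.
Qed.

Lemma prepend_common_caret X t k q : t <> Lf -> k + leaves t <= leaves X ->
  (forall s, place X (k + fst (locate t s)) (snd (locate t s)) = prepend q s) ->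
  exists i, In i (exposed t k) /\ In i (exposed X 0).
Proof.
  revert k q; induction t as [|a IHa b IHb]; intros k q Hne Hl H; [congruence|].
  simpl in Hl. pose proof (leaves_pos a) as La.
  destruct (tree_eq_dec a Lf) as [->|Ha]; [destruct (tree_eq_dec b Lf) as [->|Hb]|].
  - exists k. split; [simpl; auto|].
    apply (sibling_leaves_exposed X k q 0); [simpl in Hl; lia| |]; intro s.
    + specialize (H (scons false s)). simpl in H. rewrite Nat.add_0_r in H. exact H.
    + specialize (H (scons true s)). simpl in H. rewrite Nat.add_1_r in H. exact H.
  - destruct (IHb (S k) (q ++ [true]) Hb) as [i [Hi1 Hi2]]; [simpl in Hl; lia| |].
    + intro s. specialize (H (scons true s)). simpl in H.
      rewrite prepend_app. cbn [prepend]. rewrite <- H, stl_scons. f_equal. lia.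
    + exists i. split; auto. apply In_exposed_Nd. right. rewrite Nat.add_1_r. auto.
  - destruct (IHa k (q ++ [false]) Ha) as [i [Hi1 Hi2]]; [pose proof (leaves_pos b); lia| |].
    + intro s. rewrite prepend_app. cbn [prepend]. rewrite <- (H (scons false s)). reflexivity.
    + exists i. split; auto. apply In_exposed_Nd. auto.
Qed.

Lemma domain_tree_place X t k (g : stream -> stream) :
  (forall s, g s = place X (k + fst (locate t s)) (snd (locate t s))) ->
  k + leaves t <= leaves X ->
  (forall i, In i (exposed t k) -> ~ In i (exposed X 0)) ->
  domain_tree g t.
Proof.
  revert k g; induction t as [|a IHa b IHb]; intros k g Hg Hl Hno; simpl.
  - destruct (place_prepend X (k + 0)) as [q Hq]. exists q. intro s. rewrite Hg. apply Hq.
  - simpl in Hl. pose proof (leaves_pos a); pose proof (leaves_pos b). split; [|split].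
    + intros [q Hq]. destruct (prepend_common_caret X (Nd a b) k q) as [i [Hi1 Hi2]];
        [discriminate|simpl; lia| |].
      * intro s. rewrite <- Hg. apply Hq.
      * exact (Hno i Hi1 Hi2).
    + apply (IHa k); [intro s; rewrite Hg; reflexivity|lia|].
      intros i Hi. apply Hno. apply In_exposed_Nd. auto.
    + apply (IHb (k + leaves a)); [intro s; rewrite Hg; simpl; rewrite stl_scons; f_equal; lia|lia|].
      intros i Hi. apply Hno. apply In_exposed_Nd. auto.
Qed.

Lemma place_ext_tree X Y : leaves X = leaves Y ->
  (forall i r, i < leaves X -> place X i r = place Y i r) -> X = Y.
Proof.
  revert Y; induction X as [|a IHa b IHb]; intros Y HL H.
  - symmetry. apply leaves_one. auto.
  - destruct Y as [|c d]; [apply leaves_one in HL; discriminate|]. simpl in HL.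
    pose proof (leaves_pos b); pose proof (leaves_pos d).
    assert (Ela : leaves a = leaves c).
    { destruct (Nat.lt_total (leaves a) (leaves c)) as [L|[L|L]]; auto; exfalso.
      - specialize (H (leaves a) (fun _ => true) ltac:(simpl; lia)).
        rewrite (place_Nd_ge a b), (place_Nd_lt c d) in H by lia.
        apply scons_inj in H as [H _]; discriminate H.
      - specialize (H (leaves c) (fun _ => true) ltac:(simpl; lia)).
        rewrite (place_Nd_lt a b), (place_Nd_ge c d) in H by lia.
        apply scons_inj in H as [H _]; discriminate H. }
    f_equal.
    + apply IHa; auto. intros i r Hi. specialize (H i r ltac:(simpl; lia)).
      rewrite !place_Nd_lt in H by lia. apply scons_inj in H. tauto.
    + apply IHb; [lia|]. intros i r Hi. specialize (H (leaves a + i) r ltac:(simpl; lia)).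
      rewrite !place_Nd_ge in H by lia. rewrite <- Ela, Nat.add_comm, Nat.add_sub in H.
      apply scons_inj in H. tauto.
Qed.

Lemma tp_map_inj p p' : is_elt p -> is_elt p' -> (forall s, tp_map p s = tp_map p' s) -> p = p'.
Proof.
  intros Hp Hp' H.
  pose proof (is_elt_balanced _ Hp) as L1; pose proof (is_elt_balanced _ Hp') as L2.
  destruct Hp as [_ R1], Hp' as [_ R2]. rewrite is_reduced_iff in R1, R2.
  destruct p as [T S], p' as [T' S']. unfold balanced, tp_map in *; simpl in *.
  assert (F1 : domain_tree (tp_map (T, S)) T).
  { apply (domain_tree_place S T 0); [intro; reflexivity|lia|exact R1]. }
  assert (F2 : domain_tree (tp_map (T, S)) T').
  { apply (domain_tree_place S' T' 0); [intro; apply H|lia|exact R2]. }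
  assert (T = T') by (eapply domain_tree_unique; eauto). subst T'.
  f_equal. apply place_ext_tree; [lia|]. intros i r Hi.
  specialize (H (place T i r)). rewrite locate_place in H by lia. exact H.
Qed.

(** * The group law acts by composition *)

Fixpoint sum_leaves (F : list tree) : nat :=
  match F with [] => 0 | t :: F' => leaves t + sum_leaves F' end.

(* [expand t F] hangs the trees of [F] at the leaves of [t], left to right;
   unlike [graft] it is structural in [t] and ignores surplus trees. *)
Fixpoint expand (t : tree) (F : list tree) : tree :=
  match t with
  | Lf => hd Lf F
  | Nd a b => Nd (expand a (firstn (leaves a) F)) (expand b (skipn (leaves a) F))
  end.

Lemma sum_leaves_app F G : sum_leaves (F ++ G) = sum_leaves F + sum_leaves G.
Proof. induction F; simpl; lia. Qed.

Lemma sum_leaves_firstn_nth F i : i < length F ->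
  sum_leaves (firstn i F) + leaves (nth i F Lf) <= sum_leaves F.
Proof.
  revert i; induction F as [|t F IH]; intros [|i] H; simpl in *; try lia.
  specialize (IH i ltac:(lia)). lia.
Qed.

Lemma firstn_app_exact {A} (Fa Fb : list A) n : length Fa = n -> firstn n (Fa ++ Fb) = Fa.
Proof. intros <-. rewrite firstn_app, Nat.sub_diag, firstn_all. apply app_nil_r. Qed.

Lemma skipn_app_exact {A} (Fa Fb : list A) n : length Fa = n -> skipn n (Fa ++ Fb) = Fb.
Proof. intros <-. rewrite skipn_app, Nat.sub_diag, skipn_all. reflexivity. Qed.

Lemma split_list {A} (F : list A) n m : length F = n + m ->
  exists Fa Fb, F = Fa ++ Fb /\ length Fa = n /\ length Fb = m.
Proof.
  intro H. exists (firstn n F), (skipn n F). rewrite firstn_skipn.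
  rewrite length_firstn, length_skipn. split; [reflexivity|lia].
Qed.

Lemma expand_Nd a b Fa Fb : length Fa = leaves a ->
  expand (Nd a b) (Fa ++ Fb) = Nd (expand a Fa) (expand b Fb).
Proof. intro H. simpl. rewrite firstn_app_exact, skipn_app_exact by auto. reflexivity. Qed.

Lemma expand_Lf t : expand t (repeat Lf (leaves t)) = t.
Proof.
  induction t as [|a IHa b IHb]; [reflexivity|].
  simpl leaves. rewrite repeat_app, expand_Nd by apply repeat_length. congruence.
Qed.

Lemma expand_ind (P : tree -> list tree -> Prop) :
  (forall f, P Lf [f]) ->
  (forall a b Fa Fb, length Fa = leaves a -> length Fb = leaves b ->
     P a Fa -> P b Fb -> P (Nd a b) (Fa ++ Fb)) ->
  forall t F, length F = leaves t -> P t F.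
Proof.
  intros HLf HNd t. induction t as [|a IHa b IHb]; intros F H; simpl in H.
  - destruct F as [|f [|]]; simpl in H; try lia. apply HLf.
  - destruct (split_list F (leaves a) (leaves b) H) as [Fa [Fb [-> [H1 H2]]]]. auto.
Qed.

Lemma leaves_expand t F : length F = leaves t -> leaves (expand t F) = sum_leaves F.
Proof.
  revert t F. apply expand_ind; [intro f; simpl; lia|].
  intros a b Fa Fb H1 H2 IHa IHb. rewrite expand_Nd, sum_leaves_app by auto. simpl. lia.
Qed.

Lemma graft_expand t F l : length F = leaves t -> graft t (F ++ l) = (expand t F, l).
Proof.
  intro H. revert l. pattern t, F. revert t F H. apply expand_ind; [reflexivity|].
  intros a b Fa Fb H1 H2 IHa IHb l. rewrite expand_Nd by auto. simpl.
  rewrite <- app_assoc, IHa, IHb. reflexivity.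
Qed.

Lemma locate_expand t F s : length F = leaves t ->
  let i := fst (locate t s) in
  locate (expand t F) s =
  (sum_leaves (firstn i F) + fst (locate (nth i F Lf) (snd (locate t s))),
   snd (locate (nth i F Lf) (snd (locate t s)))).
Proof.
  intro H. revert s. pattern t, F. revert t F H. apply expand_ind.
  - intros f s. simpl. destruct (locate f s); reflexivity.
  - intros a b Fa Fb H1 H2 IHa IHb s. rewrite expand_Nd by auto. simpl. destruct (s 0).
    + simpl. rewrite IHb. cbn [fst snd]. rewrite leaves_expand by auto.
      rewrite firstn_app, (firstn_all2 Fa), sum_leaves_app, (app_nth2 Fa) by lia.
      replace (leaves a + fst (locate b (stl s)) - length Fa) with (fst (locate b (stl s))) by lia.
      f_equal. lia.
    + rewrite IHa. pose proof (locate_lt a (stl s)).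
      rewrite firstn_app, app_nth1 by lia. replace (fst (locate a (stl s)) - length Fa) with 0 by lia.
      simpl. rewrite app_nil_r. reflexivity.
Qed.

Lemma place_expand t F i j r : length F = leaves t -> i < leaves t -> j < leaves (nth i F Lf) ->
  place (expand t F) (sum_leaves (firstn i F) + j) r = place t i (place (nth i F Lf) j r).
Proof.
  intro H. revert i. pattern t, F. revert t F H. apply expand_ind.
  - intros f i Hi Hj. simpl in Hi. replace i with 0 by lia. reflexivity.
  - intros a b Fa Fb H1 H2 IHa IHb i Hi Hj. simpl in Hi. rewrite expand_Nd by auto.
    destruct (Nat.lt_ge_cases i (leaves a)) as [L|L].
    + rewrite app_nth1 in Hj |- * by lia. rewrite firstn_app.
      replace (i - length Fa) with 0 by lia. rewrite app_nil_r.
      pose proof (sum_leaves_firstn_nth Fa i ltac:(lia)).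
      rewrite !place_Nd_lt by (rewrite ?leaves_expand; lia). rewrite IHa; auto.
    + rewrite app_nth2 in Hj |- * by lia. rewrite firstn_app, firstn_all2, sum_leaves_app by lia.
      rewrite !place_Nd_ge by (rewrite ?leaves_expand; lia). rewrite leaves_expand, H1 by auto.
      replace (sum_leaves Fa + sum_leaves (firstn (i - leaves a) Fb) + j - sum_leaves Fa)
        with (sum_leaves (firstn (i - leaves a) Fb) + j) by lia.
      rewrite H1 in Hj. rewrite IHb by lia. reflexivity.
Qed.

Lemma tp_map_expand T S F s : leaves T = leaves S -> length F = leaves T ->
  tp_map (expand T F, expand S F) s = tp_map (T, S) s.
Proof.
  intros HL HF. unfold tp_map; simpl. rewrite locate_expand by auto. simpl.
  pose proof (locate_lt T s).
  rewrite place_expand by (auto; try lia; apply locate_lt). rewrite place_locate. reflexivity.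
Qed.

Fixpoint subtree (s t : tree) : Prop :=
  match s, t with
  | Lf, _ => True
  | Nd _ _, Lf => False
  | Nd a b, Nd c d => subtree a c /\ subtree b d
  end.

Lemma subtree_refl t : subtree t t.
Proof. induction t; simpl; auto. Qed.

Lemma subtree_join_l s t : subtree s (join s t).
Proof. revert t; induction s; intros [|c d]; simpl; auto using subtree_refl. Qed.

Lemma subtree_join_r s t : subtree t (join s t).
Proof. revert t; induction s; intros [|c d]; simpl; auto using subtree_refl. Qed.

Lemma length_diff t u : subtree t u -> length (diff t u) = leaves t.
Proof.
  revert u; induction t; intros [|c d] H; simpl in *; try tauto.
  rewrite length_app, IHt1, IHt2; tauto.
Qed.

Lemma expand_diff t u : subtree t u -> expand t (diff t u) = u.
Proof.
  revert u; induction t; intros [|c d] H; simpl in *; try tauto.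
  destruct H. change (expand (Nd t1 t2) (diff t1 c ++ diff t2 d) = Nd c d).
  rewrite expand_Nd by (apply length_diff; auto). rewrite IHt1, IHt2; auto.
Qed.

Lemma sum_leaves_diff t u : subtree t u -> sum_leaves (diff t u) = leaves u.
Proof.
  intro H. rewrite <- (expand_diff t u) at 2 by auto.
  rewrite leaves_expand; auto. apply length_diff; auto.
Qed.

Definition mul_unreduced (a b : treepair) : treepair :=
  let U := join (snd b) (fst a) in
  (fst (graft (fst b) (diff (snd b) U)), fst (graft (snd a) (diff (fst a) U))).

Lemma mul_unreduced_spec a b : balanced a -> balanced b ->
  balanced (mul_unreduced a b) /\
  forall s, tp_map (mul_unreduced a b) s = tp_map a (tp_map b s).
Proof.
  destruct a as [A1 A2], b as [B1 B2]. unfold balanced, mul_unreduced; simpl. intros Ha Hb.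
  set (U := join B2 A1).
  assert (T1 : subtree B2 U) by apply subtree_join_l.
  assert (T2 : subtree A1 U) by apply subtree_join_r.
  pose proof (length_diff _ _ T1) as D1. pose proof (length_diff _ _ T2) as D2.
  assert (G : forall t F, length F = leaves t -> fst (graft t F) = expand t F).
  { intros t F HF. rewrite <- (app_nil_r F) at 1. rewrite graft_expand; auto. }
  rewrite !G by lia. split.
  - rewrite !leaves_expand, !sum_leaves_diff by (auto; lia). reflexivity.
  - intro s. rewrite <- (tp_map_expand B1 B2 (diff B2 U)), <- (tp_map_expand A1 A2 (diff A1 U)) by lia.
    rewrite !expand_diff by auto. symmetry. apply tp_map_comp.
    rewrite leaves_expand, sum_leaves_diff by (auto; lia). reflexivity.
Qed.

Lemma contract_Nd a b i base : (a <> Lf \/ b <> Lf) ->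
  contract (Nd a b) i base = Nd (contract a i base) (contract b i (base + leaves a)).
Proof. intro H. destruct a, b; try reflexivity. destruct H; congruence. Qed.

Lemma contract_not_exposed t base i : ~ In i (exposed t base) -> contract t i base = t.
Proof.
  revert base; induction t as [|a IHa b IHb]; intros base H; [reflexivity|].
  destruct (tree_eq_dec a Lf), (tree_eq_dec b Lf); subst.
  1: simpl in *; destruct (Nat.eqb_spec base i); [subst; tauto|auto].
  all: rewrite contract_Nd, IHa, IHb by first [solve [auto] | intro; apply H, In_exposed_Nd; auto]; reflexivity.
Qed.

(* Expanding a tree by [caret_at k n] adds one caret on its [k]-th leaf. *)
Definition caret_at (k n : nat) : list tree := repeat Lf k ++ Nd Lf Lf :: repeat Lf (n - 1 - k).

Lemma length_caret_at k n : k < n -> length (caret_at k n) = n.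
Proof. intro. unfold caret_at. rewrite length_app. simpl. rewrite !repeat_length. lia. Qed.

Lemma caret_at_app_l k n m : k < n -> caret_at k (n + m) = caret_at k n ++ repeat Lf m.
Proof.
  intro. unfold caret_at. rewrite <- app_assoc. simpl.
  replace (n + m - 1 - k) with (n - 1 - k + m) by lia. rewrite repeat_app. reflexivity.
Qed.

Lemma caret_at_app_r k n m : caret_at (n + k) (n + m) = repeat Lf n ++ caret_at k m.
Proof.
  unfold caret_at. rewrite repeat_app, <- app_assoc.
  replace (n + m - 1 - (n + k)) with (m - 1 - k) by lia. reflexivity.
Qed.

Lemma contract_spec t base i : In i (exposed t base) ->
  let t' := contract t i base in
  leaves t = S (leaves t') /\ i - base < leaves t' /\ t = expand t' (caret_at (i - base) (leaves t')).
Proof.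
  revert base; induction t as [|a IHa b IHb]; intros base H; [simpl in H; tauto|].
  cbv zeta. pose proof (exposed_bounds _ _ _ H).
  pose proof (leaves_pos a); pose proof (leaves_pos b).
  apply exposed_Nd_inv in H. destruct H as [[-> [-> ->]]|[H|H]].
  - simpl. rewrite Nat.eqb_refl, Nat.sub_diag. auto.
  - pose proof (exposed_bounds _ _ _ H).
    destruct (IHa _ H) as [L1 [L2 L3]].
    rewrite contract_Nd by (left; intros ->; destruct H).
    rewrite (contract_not_exposed b) by (intro Hb; apply exposed_bounds in Hb; lia).
    cbn [leaves]. split; [lia|split; [lia|]].
    rewrite caret_at_app_l, expand_Nd by (rewrite ?length_caret_at; lia).
    rewrite expand_Lf. congruence.
  - pose proof (exposed_bounds _ _ _ H).
    destruct (IHb _ H) as [L1 [L2 L3]].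
    rewrite contract_Nd by (right; intros ->; destruct H).
    rewrite (contract_not_exposed a) by (intro Ha; apply exposed_bounds in Ha; lia).
    cbn [leaves]. split; [lia|split; [lia|]].
    replace (i - base) with (leaves a + (i - (base + leaves a))) by lia.
    rewrite caret_at_app_r, expand_Nd by apply repeat_length.
    rewrite expand_Lf. congruence.
Qed.

Lemma common_caret_some p i : common_caret p = Some i ->
  In i (exposed (fst p) 0) /\ In i (exposed (snd p) 0).
Proof.
  unfold common_caret. intro H. apply find_some in H as [H1 H2]. split; auto.
  apply existsb_exists in H2 as [x [Hx E]]. apply Nat.eqb_eq in E. subst; auto.
Qed.

Lemma reduce_fuel_spec fuel p : balanced p -> carets (fst p) <= fuel ->
  is_elt (reduce_fuel fuel p) /\ forall s, tp_map (reduce_fuel fuel p) s = tp_map p s.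
Proof.
  revert p; induction fuel as [|fuel IH]; intros [T S] Hb Hc; unfold balanced in Hb; simpl in *.
  - destruct T; simpl in Hc; [|lia]. symmetry in Hb. apply leaves_one in Hb. subst. split; [split|]; auto.
  - destruct (common_caret (T, S)) as [i|] eqn:E.
    + destruct (common_caret_some _ _ E) as [H1 H2]. simpl in H1, H2.
      destruct (contract_spec _ _ _ H1) as [A1 [A2 A3]].
      destruct (contract_spec _ _ _ H2) as [B1 [B2 B3]]. rewrite Nat.sub_0_r in *.
      destruct (IH (contract T i 0, contract S i 0)) as [E1 E2];
        [unfold balanced; simpl; lia|simpl; rewrite !leaves_carets in A1; lia|].
      split; auto. intro s. rewrite E2. simpl.
      rewrite A3 at 2. rewrite B3 at 2. replace (leaves (contract S i 0)) with (leaves (contract T i 0)) by lia.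
      rewrite tp_map_expand; auto; [lia|]. apply length_caret_at. auto.
    + split; auto. apply is_elt_intro; auto. unfold is_reduced. rewrite E. auto.
Qed.

Lemma mul_spec a b : balanced a -> balanced b ->
  is_elt (mul a b) /\ forall s, tp_map (mul a b) s = tp_map a (tp_map b s).
Proof.
  intros Ha Hb. destruct (mul_unreduced_spec a b Ha Hb) as [HP HS].
  destruct (reduce_fuel_spec _ _ HP (le_n _)) as [E1 E2].
  split; auto. intro s. rewrite <- HS. apply E2.
Qed.

(** * Words and the nested traversal *)

Lemma letter_balanced l : balanced (letter_elt l).
Proof. destruct l as [[|] [|]]; reflexivity. Qed.

Lemma letter_inv_involutive l : letter_inv (letter_inv l) = l.
Proof. destruct l as [g []]; reflexivity. Qed.

Lemma tp_map_letter_inv_r l s : tp_map (letter_elt l) (tp_map (letter_elt (letter_inv l)) s) = s.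
Proof.
  replace (letter_elt (letter_inv l)) with (swap (letter_elt l)) by (destruct l as [[|] [|]]; reflexivity).
  apply tp_map_swap, letter_balanced.
Qed.

Fixpoint word_map (u : word) (s : stream) : stream :=
  match u with [] => s | l :: u' => tp_map (letter_elt l) (word_map u' s) end.

Lemma word_map_app u v s : word_map (u ++ v) s = word_map u (word_map v s).
Proof. induction u; simpl; congruence. Qed.

Lemma word_map_inv_r u s : word_map u (word_map (inv_word u) s) = s.
Proof.
  revert s; induction u as [|l u IH]; intro s; [reflexivity|]. unfold inv_word in *. simpl.
  rewrite word_map_app, IH. apply tp_map_letter_inv_r.
Qed.

Definition eval_word (v : treepair) (u : word) : treepair :=
  fold_left (fun v l => mul v (letter_elt l)) u v.

Lemma eval_word_spec u v : is_elt v ->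
  is_elt (eval_word v u) /\ forall s, tp_map (eval_word v u) s = tp_map v (word_map u s).
Proof.
  revert v; induction u as [|l u IH]; intros v Hv; simpl; auto.
  destruct (mul_spec v (letter_elt l) (is_elt_balanced _ Hv) (letter_balanced l)) as [E1 E2].
  destruct (IH _ E1) as [F1 F2]. split; auto. intro s. rewrite F2, E2. reflexivity.
Qed.

Lemma mul_eq_of_tp_map w l c : is_elt w -> is_elt c ->
  (forall s, tp_map c s = tp_map w (tp_map (letter_elt l) s)) -> mul w (letter_elt l) = c.
Proof.
  intros Hw Hc H.
  destruct (mul_spec w (letter_elt l) (is_elt_balanced _ Hw) (letter_balanced _)) as [E1 E2].
  apply tp_map_inj; auto. intro s. rewrite E2, H. reflexivity.
Qed.

Lemma mul_letter_inv z l : is_elt z -> mul (mul z (letter_elt l)) (letter_elt (letter_inv l)) = z.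
Proof.
  intro Hz.
  destruct (mul_spec z (letter_elt l) (is_elt_balanced _ Hz) (letter_balanced l)) as [E1 E2].
  apply mul_eq_of_tp_map; auto. intro s. rewrite E2, tp_map_letter_inv_r. reflexivity.
Qed.

(* Right multiplication by [x0] is a rotation of the domain tree at the root,
   by [x1] a rotation at the right child of the root:
   [(T, S) * l = (T', S)] whenever [rotate l T = Some T']. *)
Definition rot_root (t : tree) : option tree :=
  match t with Nd (Nd A B) C => Some (Nd A (Nd B C)) | _ => None end.
Definition rot_root_inv (t : tree) : option tree :=
  match t with Nd A (Nd B C) => Some (Nd (Nd A B) C) | _ => None end.

Definition rot_root_by (b : bool) (t : tree) : option tree :=
  if b then rot_root t else rot_root_inv t.

Definition rotate (l : letter) (t : tree) : option tree :=
  match fst l, t with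
  | g0, _ => rot_root_by (snd l) t
  | g1, Nd A R => option_map (Nd A) (rot_root_by (snd l) R)
  | g1, Lf => None
  end.

Lemma locate_rot_root_by b T T' s : rot_root_by b T = Some T' ->
  locate T (tp_map (letter_elt (g0, b)) s) = locate T' s.
Proof.
  destruct b; [destruct T as [|[|A B] C]|destruct T as [|A [|B C]]]; simpl; try discriminate;
    intro H; injection H as <-;
    rewrite (stream_expand3 s); generalize (s 0) (s 1) (s 2) (stl (stl (stl s)));
    intros [] [] [] r; unfold tp_map; simpl; rewrite ?stl_scons; try reflexivity; f_equal; lia.
Qed.

Lemma tp_map_x1 b s : tp_map (letter_elt (g1, b)) (scons true s) = scons true (tp_map (letter_elt (g0, b)) s)
                   /\ tp_map (letter_elt (g1, b)) (scons false s) = scons false s.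
Proof.
  rewrite (stream_expand3 s). generalize (s 0) (s 1) (s 2) (stl (stl (stl s))).
  destruct b; intros [] [] [] r; split; reflexivity.
Qed.

Lemma locate_rotate l T T' s : rotate l T = Some T' ->
  locate T (tp_map (letter_elt l) s) = locate T' s.
Proof.
  destruct l as [[|] b]; [apply locate_rot_root_by|].
  destruct T as [|A R]; [discriminate|].
  change (option_map (Nd A) (rot_root_by b R) = Some T' ->
          locate (Nd A R) (tp_map (letter_elt (g1, b)) s) = locate T' s).
  destruct (rot_root_by b R) as [R'|] eqn:E; [|discriminate]. intro H; injection H as <-.
  rewrite <- (scons_eta s). destruct (tp_map_x1 b (stl s)) as [Ht Hf].
  destruct (s 0); [rewrite Ht|rewrite Hf]; simpl; rewrite ?stl_scons;
    [rewrite (locate_rot_root_by _ _ _ _ E)|]; reflexivity.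
Qed.

Fixpoint rotate_word (u : word) (T : tree) : option tree :=
  match u with
  | [] => Some T
  | l :: u' => match rotate l T with Some T1 => rotate_word u' T1 | None => None end
  end.

Lemma locate_rotate_word u T T' s : rotate_word u T = Some T' -> locate T (word_map u s) = locate T' s.
Proof.
  revert T; induction u as [|l u IH]; intros T H; simpl in *; [congruence|].
  destruct (rotate l T) as [T1|] eqn:E; [|discriminate].
  rewrite (locate_rotate _ _ _ _ E). auto.
Qed.

Lemma rotate_word_app u v T :
  rotate_word (u ++ v) T = match rotate_word u T with Some T1 => rotate_word v T1 | None => None end.
Proof.
  revert T; induction u as [|l u IH]; intro T; simpl; auto. destruct (rotate l T); auto.
Qed.

Fixpoint right_vine (k : nat) (V : tree) : tree :=
  match k with 0 => V | S k' => Nd Lf (right_vine k' V) end.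
Fixpoint graft_leftmost (M t : tree) : tree :=
  match t with Lf => M | Nd a b => Nd (graft_leftmost M a) b end.
Fixpoint graft_rightmost (t V : tree) : tree :=
  match t with Lf => V | Nd a b => Nd a (graft_rightmost b V) end.

Lemma right_vine_add m n V : right_vine (m + n) V = right_vine m (right_vine n V).
Proof. induction m; simpl; congruence. Qed.

Lemma right_vine_S k V : right_vine k (Nd Lf V) = Nd Lf (right_vine k V).
Proof. induction k; simpl; congruence. Qed.

Lemma graft_leftmost_Lf t : graft_leftmost Lf t = t.
Proof. induction t; simpl; congruence. Qed.

Lemma graft_rightmost_Lf t : graft_rightmost t Lf = t.
Proof. induction t; simpl; congruence. Qed.

Lemma graft_rightmost_vine k V : graft_rightmost (right_vine k Lf) V = right_vine k V.
Proof. induction k; simpl; congruence. Qed.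

Lemma has_interior_R_false t : has_interior_R t = false -> t = right_vine (carets t) Lf.
Proof.
  induction t as [|[|a1 a2] IHa b IHb]; simpl; auto; [|discriminate].
  intro H. f_equal. auto.
Qed.

Lemma rotate_trav_int t a M V :
  rotate_word (trav_int t) (Nd a (Nd M (right_vine (carets t) V))) = Some (Nd a (Nd (graft_leftmost M t) V)).
Proof.
  revert a M V; induction t as [|t1 IH1 t2 IH2]; intros a M V; simpl; auto.
  rewrite rotate_word_app, <- right_vine_S, right_vine_add, right_vine_S, IH1. simpl.
  destruct t2 as [|u1 u2]; [reflexivity|].
  cbn [rotate_word rotate rot_root_by rot_root_inv x0i fst snd].
  rewrite rotate_word_app. specialize (IH2 (Nd a (graft_leftmost M t1)) Lf V).
  rewrite IH2, graft_leftmost_Lf. reflexivity.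
Qed.

Lemma rotate_trav_right t a V :
  rotate_word (trav_right t) (Nd a (right_vine (carets t) V)) = Some (Nd a (graft_rightmost t V)).
Proof.
  revert a V; induction t as [|t1 IH1 t2 IH2]; intros a V; simpl; auto.
  rewrite rotate_word_app, right_vine_add.
  pose proof (rotate_trav_int t1 a Lf (right_vine (carets t2) V)) as HI. simpl in HI.
  rewrite HI, graft_leftmost_Lf.
  destruct (has_interior_R t2) eqn:E; simpl.
  - rewrite rotate_word_app, IH2. reflexivity.
  - rewrite (has_interior_R_false t2 E) at 2. rewrite graft_rightmost_vine. reflexivity.
Qed.

Lemma rotate_trav_left t1 t2 V :
  rotate_word (trav_left (Nd t1 t2)) (right_vine (S (S (carets t1 + carets t2))) V) = Some (Nd t1 (Nd t2 V)).
Proof.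
  revert t2 V; induction t1 as [|u1 IH1 u2 IH2]; intros t2 V.
  - pose proof (rotate_trav_int t2 Lf Lf V) as HI. simpl in HI. rewrite graft_leftmost_Lf in HI. exact HI.
  - change (trav_left (Nd (Nd u1 u2) t2)) with (trav_left (Nd u1 u2) ++ [x0i] ++ trav_int t2).
    rewrite rotate_word_app.
    replace (S (S (carets (Nd u1 u2) + carets t2))) with (S (S (carets u1 + carets u2)) + S (carets t2))
      by (simpl; lia).
    rewrite right_vine_add, IH1. simpl. pose proof (rotate_trav_int t2 (Nd u1 u2) Lf V) as HI.
    simpl in HI. rewrite graft_leftmost_Lf in HI. exact HI.
Qed.

(* Read as a sequence of rotations, [gamma t] builds [t] from the right vine. *)
Lemma rotate_gamma t : rotate_word (gamma t) (right_vine (carets t) Lf) = Some t.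
Proof.
  destruct t as [|[|t1 t2] b]; [reflexivity| |].
  - change (rotate_word (trav_right b) (Nd Lf (right_vine (carets b) Lf)) = Some (Nd Lf b)).
    rewrite rotate_trav_right, graft_rightmost_Lf. reflexivity.
  - change (rotate_word (trav_left (Nd t1 t2) ++ [x0i] ++ trav_right b)
              (right_vine (S (S (carets t1 + carets t2) + carets b)) Lf) = Some (Nd (Nd t1 t2) b)).
    replace (S (S (carets t1 + carets t2) + carets b)) with (S (S (carets t1 + carets t2)) + carets b)
      by lia.
    rewrite rotate_word_app, right_vine_add, rotate_trav_left. simpl.
    rewrite rotate_trav_right, graft_rightmost_Lf. reflexivity.
Qed.

(** * Free reduction *)

Inductive cancel_step : word -> word -> Prop :=
  cancel_step_intro u1 u2 l : cancel_step (u1 ++ l :: letter_inv l :: u2) (u1 ++ u2).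

Lemma letter_eqb_eq a b : letter_eqb a b = true -> a = b.
Proof. destruct a as [[|] [|]], b as [[|] [|]]; intro H; try reflexivity; discriminate H. Qed.

Lemma letter_eqb_refl a : letter_eqb a a = true.
Proof. destruct a as [[|] [|]]; reflexivity. Qed.

Lemma fold_fred_step_cancels w acc :
  clos_refl_trans _ cancel_step (rev acc ++ w) (rev (fold_left fred_step w acc)).
Proof.
  revert acc; induction w as [|x w IH]; intro acc; simpl.
  - rewrite app_nil_r. apply rt_refl.
  - destruct acc as [|y acc']; simpl; [apply (IH [x])|].
    destruct (letter_eqb y (letter_inv x)) eqn:Ey.
    + apply letter_eqb_eq in Ey. subst y. eapply rt_trans; [apply rt_step|apply IH].
      rewrite <- app_assoc. simpl. rewrite <- (letter_inv_involutive x) at 2.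
      apply (cancel_step_intro (rev acc') w (letter_inv x)).
    + specialize (IH (x :: y :: acc')). simpl in IH. rewrite <- !app_assoc in IH.
      rewrite <- app_assoc. exact IH.
Qed.

Lemma free_reduce_cancels w : clos_refl_trans _ cancel_step w (free_reduce w).
Proof. apply (fold_fred_step_cancels w []). Qed.

Lemma word_map_cancel u u' s : clos_refl_trans _ cancel_step u u' -> word_map u s = word_map u' s.
Proof.
  induction 1 as [u u' []| |]; [|reflexivity|congruence].
  rewrite !word_map_app. simpl. rewrite tp_map_letter_inv_r. reflexivity.
Qed.

Fixpoint reduced_acc (acc : word) : Prop :=
  match acc with
  | x :: ((y :: _) as r) => letter_eqb y (letter_inv x) = false /\ reduced_acc r
  | _ => True
  end.

Lemma reduced_acc_tail x r : reduced_acc (x :: r) -> reduced_acc r.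
Proof. destruct r; simpl; tauto. Qed.

Lemma reduced_acc_fold u acc : reduced_acc acc -> reduced_acc (fold_left fred_step u acc).
Proof.
  revert acc; induction u as [|x u IH]; intros acc H; simpl; auto. apply IH.
  destruct acc as [|y acc']; simpl; auto.
  destruct (letter_eqb y (letter_inv x)) eqn:E; [eapply reduced_acc_tail; eauto|simpl; auto].
Qed.

Lemma fold_fred_step_inverse_pair acc l :
  reduced_acc acc -> fold_left fred_step [l; letter_inv l] acc = acc.
Proof.
  intro H. simpl. destruct acc as [|y r]; simpl.
  - rewrite letter_inv_involutive, letter_eqb_refl. reflexivity.
  - destruct (letter_eqb y (letter_inv l)) eqn:E.
    + apply letter_eqb_eq in E. subst y. destruct r as [|z r']; simpl; auto.
      destruct H as [H1 _]. rewrite letter_inv_involutive in *. rewrite H1. reflexivity.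
    + simpl. rewrite letter_inv_involutive, letter_eqb_refl. reflexivity.
Qed.

Lemma free_reduce_cancel u l v : free_reduce (u ++ [l; letter_inv l] ++ v) = free_reduce (u ++ v).
Proof.
  unfold free_reduce. rewrite !fold_left_app, fold_fred_step_inverse_pair; auto.
  apply reduced_acc_fold. exact I.
Qed.

Lemma free_reduce_cancel_end u l : free_reduce (u ++ [l; letter_inv l]) = free_reduce u.
Proof. pose proof (free_reduce_cancel u l []) as H. rewrite !app_nil_r in H. exact H. Qed.

Lemma fold_fred_step_reduced A1 A2 :
  reduced_acc (A1 ++ A2) -> fold_left fred_step (rev A1) A2 = A1 ++ A2.
Proof.
  revert A2; induction A1 as [|a A1 IH]; intros A2 H; simpl; auto.
  rewrite fold_left_app, IH by (eapply reduced_acc_tail; eauto). simpl.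
  destruct (A1 ++ A2) as [|y r] eqn:E; simpl; auto.
  change (reduced_acc (a :: (A1 ++ A2))) in H. rewrite E in H. destruct H as [-> _]. reflexivity.
Qed.

Lemma free_reduce_app_l u v : free_reduce (free_reduce u ++ v) = free_reduce (u ++ v).
Proof.
  unfold free_reduce. rewrite !fold_left_app. do 2 f_equal.
  pose proof (fold_fred_step_reduced (fold_left fred_step u []) []) as K.
  rewrite app_nil_r in K. apply K, reduced_acc_fold. exact I.
Qed.

(** * The normal form evaluates to the element *)

Lemma word_map_eta w s : balanced w -> word_map (eta w) s = tp_map w s.
Proof.
  destruct w as [Tm Tp]. unfold balanced, eta, tp_map; simpl. intro HL.
  rewrite <- (word_map_cancel _ _ s (free_reduce_cancels _)), word_map_app.
  set (x := word_map (gamma Tm) s).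
  assert (Hx : locate (right_vine (carets Tm) Lf) x = locate Tm s)
    by apply locate_rotate_word, rotate_gamma.
  rewrite <- Hx. replace (carets Tm) with (carets Tp) by (rewrite !leaves_carets in HL; lia).
  set (y := word_map (inv_word (gamma Tp)) x).
  assert (Ex : x = word_map (gamma Tp) y) by (unfold y; rewrite word_map_inv_r; reflexivity).
  rewrite Ex, (locate_rotate_word _ _ _ _ (rotate_gamma Tp)). symmetry. apply place_locate.
Qed.

Lemma eval_eta w : is_elt w -> eval_word one (eta w) = w.
Proof.
  intro Hw. assert (H1 : is_elt one) by (split; reflexivity).
  destruct (eval_word_spec (eta w) one H1) as [E1 E2].
  apply tp_map_inj; auto. intro s. rewrite E2. apply word_map_eta, is_elt_balanced; auto.
Qed.

(** * Edge paths *)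

Definition homotopic : list treepair -> list treepair -> Prop :=
  clos_refl_sym_trans (list treepair) backtrack.

Lemma homotopic_ctx l1 l2 p q : homotopic p q -> homotopic (l1 ++ p ++ l2) (l1 ++ q ++ l2).
Proof.
  induction 1 as [p q [m1 [m2 [u [v [H [-> ->]]]]]]| | |].
  - apply rst_step. exists (l1 ++ m1), (m2 ++ l2), u, v. split; auto.
    rewrite <- !app_assoc. split; reflexivity.
  - apply rst_refl.
  - apply rst_sym; auto.
  - eapply rst_trans; eauto.
Qed.

Fixpoint walk_init (v : treepair) (u : word) : list treepair :=
  match u with [] => [] | l :: u' => v :: walk_init (mul v (letter_elt l)) u' end.

Lemma walk_split u v : walk v u = walk_init v u ++ [eval_word v u].
Proof. revert v; induction u as [|l u IH]; intro v; simpl; rewrite ?IH; reflexivity. Qed.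

Lemma walk_app u v u' : walk v (u ++ u') = walk_init v u ++ walk (eval_word v u) u'.
Proof. revert v; induction u as [|l u IH]; intro v; simpl; rewrite ?IH; reflexivity. Qed.

Lemma last_walk v u : last (walk v u) one = eval_word v u.
Proof. rewrite walk_split. apply last_last. Qed.

Lemma homotopic_walk_cancel v u u' : is_elt v ->
  clos_refl_trans _ cancel_step u u' -> homotopic (walk v u) (walk v u').
Proof.
  intros Hv H. induction H as [u u' [u1 u2 l]| |]; [|apply rst_refl|eapply rst_trans; eauto].
  rewrite !walk_app. set (z := eval_word v u1).
  assert (Hz : is_elt z) by (apply eval_word_spec; auto).
  simpl. rewrite mul_letter_inv by auto.
  replace (walk z u2) with (z :: tl (walk z u2)) by (destruct u2; reflexivity).
  apply rst_step. exists (walk_init v u1), (tl (walk z u2)), z, (mul z (letter_elt l)).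
  split; [exists l; auto|split; reflexivity].
Qed.

Lemma homotopic_there_and_back u v :
  homotopic (walk_init v u ++ [eval_word v u] ++ rev (walk_init v u)) [v].
Proof.
  revert v; induction u as [|l u IH]; intro v; simpl; [apply rst_refl|].
  set (v1 := mul v (letter_elt l)).
  apply rst_trans with ([v] ++ [v1] ++ [v]).
  - replace (v :: walk_init v1 u ++ eval_word v1 u :: rev (walk_init v1 u) ++ [v])
      with ([v] ++ (walk_init v1 u ++ [eval_word v1 u] ++ rev (walk_init v1 u)) ++ [v])
      by (simpl; rewrite <- !app_assoc; reflexivity).
    apply homotopic_ctx, IH.
  - apply rst_step. exists [], [], v, v1. split; [exists l; auto|split; reflexivity].
Qed.

(* The loop of [good_edge] is the walk along [eta w] followed by [a^-1],
   then back along [eta (w a^-1)]; if the two labels freely reduce to the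
   same word, only backtracks have to be removed. *)
Lemma good_edge_of_free_reduce w a : is_elt w ->
  eta (mul w (letter_elt (a, false))) = free_reduce (eta w ++ [(a, false)]) -> good_edge w a.
Proof.
  intros Hw Heq. unfold good_edge, Psi. cbv zeta.
  set (w' := mul w (letter_elt (a, false))) in *.
  assert (Hw' : is_elt w')
    by (apply mul_spec; [apply is_elt_balanced; auto|apply letter_balanced]).
  rewrite !last_walk, !eval_eta by auto. split; [reflexivity|split; [reflexivity|]].
  rewrite (walk_split (eta w')), eval_eta, rev_app_distr by auto. simpl.
  replace (walk one (eta w) ++ w' :: rev (walk_init one (eta w')))
    with (walk one (eta w ++ [(a, false)]) ++ rev (walk_init one (eta w'))).
  2:{ rewrite walk_app, (walk_split (eta w)), eval_eta by auto. rewrite <- !app_assoc. reflexivity. }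
  unfold nullhomotopic.
  replace (hd one (walk one (eta w ++ [(a, false)]) ++ rev (walk_init one (eta w')))) with one
    by (destruct (eta w); reflexivity).
  apply rst_trans with (walk one (eta w') ++ rev (walk_init one (eta w'))).
  - apply (homotopic_ctx [] (rev (walk_init one (eta w')))). rewrite Heq.
    apply homotopic_walk_cancel; [split; reflexivity|apply free_reduce_cancels].
  - rewrite walk_split, eval_eta, <- app_assoc by auto.
    pose proof (homotopic_there_and_back (eta w') one) as P. rewrite eval_eta in P by auto. exact P.
Qed.

(** * Multiplying by [x0^-1] *)

Fixpoint split_last (t : tree) : tree :=
  match t with Lf => Nd Lf Lf | Nd a b => Nd a (split_last b) end.
Fixpoint split_first (t : tree) : tree :=
  match t with Lf => Nd Lf Lf | Nd a b => Nd (split_first a) b end.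

Lemma leaves_split_last t : leaves (split_last t) = S (leaves t).
Proof. induction t; simpl; lia. Qed.

Lemma leaves_split_first t : leaves (split_first t) = S (leaves t).
Proof. induction t; simpl; lia. Qed.

Lemma exposed_split_last t base i : In i (exposed (split_last t) base) ->
  In i (exposed t base) \/ i = base + leaves t - 1.
Proof.
  revert base; induction t as [|a IHa b IHb]; intros base H.
  - simpl in H. destruct H as [->|[]]. right. simpl. lia.
  - apply exposed_Nd_inv in H. destruct H as [[_ [E _]]|[H|H]]; [destruct b; discriminate| |].
    + left. apply In_exposed_Nd. auto.
    + apply IHb in H as [H|H]; [left; apply In_exposed_Nd; auto|right].
      simpl. pose proof (leaves_pos b). lia.
Qed.

Lemma exposed_split_first t base i : In i (exposed t base) -> i <> base ->
  In (S i) (exposed (split_first t) base).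
Proof.
  revert base; induction t as [|a IHa b IHb]; intros base H Hi; [simpl in H; tauto|].
  apply In_exposed_Nd. apply exposed_Nd_inv in H. destruct H as [[_ [_ E]]|[H|H]]; [congruence| |].
  - left. apply IHa; auto.
  - right. rewrite leaves_split_first, <- Nat.add_succ_comm. apply exposed_shift; auto.
Qed.

Lemma exposed_base_split_first t base : In base (exposed t base) -> exists U, t = split_first U.
Proof.
  revert base; induction t as [|a IHa b IHb]; intros base H; [simpl in H; tauto|].
  apply exposed_Nd_inv in H. destruct H as [[-> [-> _]]|[H|H]].
  - exists Lf; reflexivity.
  - destruct (IHa _ H) as [U ->]. exists (Nd U b). reflexivity.
  - apply exposed_bounds in H. pose proof (leaves_pos a). lia.
Qed.

Lemma place_split_last_lt t i r : i < leaves t - 1 -> place (split_last t) i r = place t i r.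
Proof.
  revert i; induction t as [|a IHa b IHb]; intros i H; simpl in *; [lia|].
  destruct (i <? leaves a) eqn:E; auto. apply Nat.ltb_ge in E. rewrite IHb by lia. reflexivity.
Qed.

Lemma place_split_last_end t j r : j <= 1 ->
  place (split_last t) (leaves t - 1 + j) r = place t (leaves t - 1) (scons (j =? 1) r).
Proof.
  intro Hj. induction t as [|a IHa b IHb]; simpl; [destruct j as [|[|]]; simpl; auto; lia|].
  pose proof (leaves_pos b).
  replace (leaves a + leaves b - 1 + j <? leaves a) with false by (symmetry; apply Nat.ltb_ge; lia).
  replace (leaves a + leaves b - 1 <? leaves a) with false by (symmetry; apply Nat.ltb_ge; lia).
  replace (leaves a + leaves b - 1 + j - leaves a) with (leaves b - 1 + j) by lia.
  replace (leaves a + leaves b - 1 - leaves a) with (leaves b - 1) by lia. rewrite IHb. reflexivity.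
Qed.

Lemma place_split_first_start t j r : j <= 1 ->
  place (split_first t) j r = place t 0 (scons (j =? 1) r).
Proof.
  intro Hj. induction t as [|a IHa b IHb]; [destruct j as [|[|]]; simpl; auto; lia|].
  pose proof (leaves_pos a). simpl split_first. rewrite !place_Nd_lt by (rewrite ?leaves_split_first; lia).
  rewrite IHa. reflexivity.
Qed.

Lemma place_split_first_gt t i r : 1 <= i -> i < leaves t ->
  place (split_first t) (S i) r = place t i r.
Proof.
  revert i; induction t as [|a IHa b IHb]; intros i H1 H2; simpl in *; [lia|].
  rewrite leaves_split_first. destruct (i <? leaves a) eqn:E.
  - apply Nat.ltb_lt in E. replace (S i <? S (leaves a)) with true by (symmetry; apply Nat.ltb_lt; lia).
    rewrite IHa; auto.
  - apply Nat.ltb_ge in E. replace (S i <? S (leaves a)) with false by (symmetry; apply Nat.ltb_ge; lia).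
    reflexivity.
Qed.

(* The letter of rule (2) contributed by a caret whose left subtree is [a]. *)
Definition left_letter (a : tree) : word := match a with Lf => [] | _ => [x0i] end.

Lemma trav_left_Nd a b : trav_left (Nd a b) = trav_left a ++ left_letter a ++ trav_int b.
Proof. reflexivity. Qed.

Lemma gamma_Nd a b : gamma (Nd a b) = trav_left a ++ left_letter a ++ trav_right b.
Proof. reflexivity. Qed.

Lemma trav_right_no_interior C : has_interior_R C = false -> trav_right C = [].
Proof.
  intro H. rewrite (has_interior_R_false C H). destruct (carets C) as [|k]; [reflexivity|].
  simpl. clear. assert (E : has_interior_R (right_vine k Lf) = false) by (induction k; auto).
  rewrite E. reflexivity.
Qed.

Lemma has_interior_R_split_last t : has_interior_R (split_last t) = has_interior_R t.
Proof. induction t as [|[] IHa b IHb]; simpl; auto. Qed.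

Lemma trav_right_split_last t : trav_right (split_last t) = trav_right t.
Proof. induction t as [|a _ b IH]; simpl; auto. rewrite has_interior_R_split_last, IH. reflexivity. Qed.

Lemma gamma_split_last t : t <> Lf -> gamma (split_last t) = gamma t.
Proof.
  destruct t as [|a b]; [congruence|]. intros _.
  change (split_last (Nd a b)) with (Nd a (split_last b)).
  rewrite !gamma_Nd, trav_right_split_last. reflexivity.
Qed.

Lemma trav_left_split_first a : trav_left (split_first a) ++ [x0i] = x0i :: trav_left a ++ left_letter a.
Proof.
  induction a as [|a1 IH1 a2 _]; [reflexivity|].
  change (split_first (Nd a1 a2)) with (Nd (split_first a1) a2).
  rewrite !trav_left_Nd. replace (left_letter (split_first a1)) with [x0i] by (destruct a1; reflexivity).
  rewrite app_assoc, IH1. simpl. rewrite <- !app_assoc. reflexivity.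
Qed.

Lemma gamma_split_first U : U <> Lf -> gamma (split_first U) = x0i :: gamma U.
Proof.
  destruct U as [|a b]; [congruence|]. intros _.
  change (split_first (Nd a b)) with (Nd (split_first a) b).
  rewrite !gamma_Nd. replace (left_letter (split_first a)) with [x0i] by (destruct a; reflexivity).
  rewrite app_assoc, trav_left_split_first. simpl. rewrite <- app_assoc. reflexivity.
Qed.

Lemma free_reduce_eta_app w u :
  free_reduce (eta w ++ u) = free_reduce (inv_word (gamma (snd w)) ++ gamma (fst w) ++ u).
Proof. unfold eta. rewrite free_reduce_app_l, app_assoc. reflexivity. Qed.

(* Generic case: [x0^-1] rotates the root of [T_-] to the left. *)
Lemma mul_x0i_rotate A B C Tp : is_elt (Nd A (Nd B C), Tp) ->
  ~ (A = Lf /\ B = Lf /\ In 0 (exposed Tp 0)) ->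
  mul (Nd A (Nd B C), Tp) (letter_elt x0i) = (Nd (Nd A B) C, Tp).
Proof.
  intros Hw Hn. pose proof (is_elt_balanced _ Hw) as HL. pose proof Hw as [_ HR].
  apply mul_eq_of_tp_map; [exact Hw| |].
  - apply is_elt_intro; [unfold balanced in *; simpl in *; lia|].
    rewrite is_reduced_iff in HR |- *. simpl fst in HR |- *. simpl snd in HR |- *.
    intros i H1 H2. apply (HR i); auto. apply exposed_Nd_inv in H1 as [[E _]|[H1|H1]]; [discriminate| |].
    + apply exposed_Nd_inv in H1 as [[-> [-> ->]]|[H1|H1]];
        [tauto|apply In_exposed_Nd; auto|].
      apply In_exposed_Nd. right. apply In_exposed_Nd. auto.
    + apply In_exposed_Nd. right. apply In_exposed_Nd. right. simpl in H1.
      exact H1.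
  - intro s. unfold tp_map at 2, x0i. cbn [fst snd].
    rewrite (locate_rot_root_by false (Nd A (Nd B C)) (Nd (Nd A B) C) s); reflexivity.
Qed.

Lemma gamma_rotate A B C : gamma (Nd A (Nd B C)) ++ [x0i] =
  gamma (Nd (Nd A B) C) ++ (if has_interior_R C then [x0; x0i] else []).
Proof.
  rewrite !gamma_Nd, trav_left_Nd. simpl trav_right.
  destruct (has_interior_R C) eqn:E.
  - simpl left_letter. repeat progress (simpl; rewrite <- ?app_assoc). reflexivity.
  - rewrite trav_right_no_interior by auto. simpl left_letter. rewrite <- !app_assoc, !app_nil_r.
    reflexivity.
Qed.

Lemma eta_mul_x0i_rotate A B C Tp : is_elt (Nd A (Nd B C), Tp) ->
  ~ (A = Lf /\ B = Lf /\ In 0 (exposed Tp 0)) ->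
  eta (mul (Nd A (Nd B C), Tp) (letter_elt x0i)) = free_reduce (eta (Nd A (Nd B C), Tp) ++ [x0i]).
Proof.
  intros Hw Hn. rewrite mul_x0i_rotate, free_reduce_eta_app by auto. simpl fst. simpl snd.
  rewrite gamma_rotate. unfold eta. simpl fst. simpl snd.
  destruct (has_interior_R C); [|rewrite app_nil_r; reflexivity].
  rewrite app_assoc. symmetry. apply (free_reduce_cancel_end _ x0).
Qed.

(* [T_-] has a leaf as right child: [x0^-1] needs a new caret on the last leaf. *)
Lemma mul_x0i_right_leaf A Tp : is_elt (Nd A Lf, Tp) ->
  mul (Nd A Lf, Tp) (letter_elt x0i) = (Nd (Nd A Lf) Lf, split_last Tp).
Proof.
  intros Hw. pose proof (is_elt_balanced _ Hw) as HL. pose proof Hw as [_ HR].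
  unfold balanced in HL. simpl in HL. pose proof (leaves_pos A).
  apply mul_eq_of_tp_map; [exact Hw| |].
  - apply is_elt_intro; [unfold balanced; simpl; rewrite leaves_split_last; lia|].
    rewrite is_reduced_iff in HR |- *. simpl fst in HR |- *. simpl snd in HR |- *.
    intros i H1 H2.
    apply exposed_Nd_inv in H1 as [[E _]|[H1|H1]]; [discriminate| |simpl in H1; tauto].
    apply exposed_Nd_inv in H1 as [[-> _]|[H1|H1]]; [|pose proof (exposed_bounds _ _ _ H1)|simpl in H1; tauto].
    + rewrite (leaves_two Tp) in HR by (simpl in HL; lia). apply (HR 0); simpl; auto.
    + apply exposed_split_last in H2 as [H2|H2]; [|lia].
      apply (HR i); auto. apply In_exposed_Nd. auto.
  - intro s. rewrite (stream_expand3 s). generalize (s 0) (s 1) (s 2) (stl (stl (stl s))).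
    intros b0 b1 b2 r. unfold tp_map. simpl.
    destruct b0, b1; simpl; rewrite ?stl_scons, ?Nat.add_0_r.
    1,2: replace (leaves A + 1) with (leaves Tp - 1 + 1) by lia.
    3: replace (leaves A) with (leaves Tp - 1 + 0) at 1 by lia.
    1-3: rewrite place_split_last_end by lia; replace (leaves Tp - 1) with (leaves A) by lia; reflexivity.
    pose proof (locate_lt A (scons b2 r)). apply place_split_last_lt. lia.
Qed.

Lemma eta_mul_x0i_right_leaf A Tp : is_elt (Nd A Lf, Tp) ->
  eta (mul (Nd A Lf, Tp) (letter_elt x0i)) = free_reduce (eta (Nd A Lf, Tp) ++ [x0i]).
Proof.
  intros Hw. pose proof (is_elt_balanced _ Hw) as HL. unfold balanced in HL. simpl in HL.
  assert (HA : A <> Lf).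
  { intros ->. destruct Hw as [_ HR]. rewrite (leaves_two Tp) in HR by (simpl in HL; lia).
    discriminate HR. }
  assert (HT : Tp <> Lf) by (intros ->; simpl in HL; pose proof (leaves_pos A); lia).
  rewrite mul_x0i_right_leaf, free_reduce_eta_app by auto. unfold eta. simpl fst. simpl snd.
  rewrite gamma_split_last by auto.
  replace (gamma (Nd (Nd A Lf) Lf)) with (gamma (Nd A Lf) ++ [x0i]).
  - rewrite app_assoc. reflexivity.
  - rewrite !gamma_Nd, trav_left_Nd. destruct A; [congruence|]. simpl.
    reflexivity.
Qed.

(* [T_-] and [T_+] both have the caret over the first two leaves: [x0^-1] cancels it. *)
Lemma mul_x0i_cancel U C : C <> Lf -> is_elt (Nd Lf (Nd Lf C), split_first U) ->
  mul (Nd Lf (Nd Lf C), split_first U) (letter_elt x0i) = (Nd Lf C, U).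
Proof.
  intros HC Hw. pose proof (is_elt_balanced _ Hw) as HL. pose proof Hw as [_ HR].
  unfold balanced in HL. simpl in HL. rewrite leaves_split_first in HL.
  apply mul_eq_of_tp_map; [exact Hw| |].
  - apply is_elt_intro; [unfold balanced; simpl; lia|].
    rewrite is_reduced_iff in HR |- *. simpl fst in HR |- *. simpl snd in HR |- *.
    intros i H1 H2. apply exposed_Nd_inv in H1 as [[_ [E _]]|[H1|H1]]; [congruence|simpl in H1; tauto|].
    simpl in H1. pose proof (exposed_bounds _ _ _ H1).
    apply (HR (S i)); [|apply exposed_split_first; auto; lia].
    apply In_exposed_Nd. right. apply In_exposed_Nd. right. apply exposed_shift. auto.
  - intro s. unfold tp_map at 2, x0i. cbn [fst snd].
    rewrite (locate_rot_root_by false (Nd Lf (Nd Lf C)) (Nd (Nd Lf Lf) C) s) by reflexivity.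
    rewrite (stream_expand3 s). generalize (s 0) (s 1) (s 2) (stl (stl (stl s))). intros b0 b1 b2 r.
    destruct b0; [|destruct b1]; unfold tp_map; simpl; rewrite ?stl_scons; symmetry.
    + pose proof (locate_lt C (scons b1 (scons b2 r))). apply place_split_first_gt; lia.
    + apply (place_split_first_start U 1). lia.
    + apply (place_split_first_start U 0). lia.
Qed.

Lemma eta_mul_x0i_cancel U C : C <> Lf -> is_elt (Nd Lf (Nd Lf C), split_first U) ->
  eta (mul (Nd Lf (Nd Lf C), split_first U) (letter_elt x0i))
  = free_reduce (eta (Nd Lf (Nd Lf C), split_first U) ++ [x0i]).
Proof.
  intros HC Hw. pose proof (is_elt_balanced _ Hw) as HL. unfold balanced in HL. simpl in HL.
  rewrite leaves_split_first in HL.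
  assert (HU : U <> Lf).
  { intros ->. destruct C as [|C1 C2]; [congruence|]. simpl in HL.
    pose proof (leaves_pos C1); pose proof (leaves_pos C2); lia. }
  rewrite mul_x0i_cancel, free_reduce_eta_app by auto. unfold eta. simpl fst. simpl snd.
  rewrite gamma_split_first by auto. unfold inv_word at 2. simpl map. simpl rev.
  change (gamma (Nd Lf (Nd Lf C))) with (if has_interior_R C then [x0i] ++ trav_right C ++ [x0] else []).
  change (gamma (Nd Lf C)) with (trav_right C).
  change (rev (map letter_inv (gamma U))) with (inv_word (gamma U)).
  change (letter_inv x0i) with x0. destruct (has_interior_R C) eqn:E.
  - replace ((inv_word (gamma U) ++ [x0]) ++ ([x0i] ++ trav_right C ++ [x0]) ++ [x0i])
      with (inv_word (gamma U) ++ [x0; letter_inv x0] ++ (trav_right C ++ [x0; letter_inv x0]))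
      by (simpl; rewrite <- !app_assoc; reflexivity).
    rewrite free_reduce_cancel, app_assoc, free_reduce_cancel_end. reflexivity.
  - rewrite trav_right_no_interior by auto. rewrite <- app_assoc.
    change ([x0] ++ [] ++ [x0i]) with [x0; letter_inv x0].
    rewrite free_reduce_cancel_end, app_nil_r. reflexivity.
Qed.

Lemma eta_mul_x0i w : is_elt w -> eta (mul w (letter_elt x0i)) = free_reduce (eta w ++ [x0i]).
Proof.
  intro Hw. pose proof (is_elt_balanced _ Hw) as HL.
  destruct w as [[|A [|B C]] Tp]; unfold balanced in HL; simpl in HL.
  - symmetry in HL. apply leaves_one in HL as ->. vm_compute. reflexivity.
  - apply eta_mul_x0i_right_leaf; auto.
  - destruct (tree_eq_dec A Lf) as [->|HA]; [|apply eta_mul_x0i_rotate; tauto].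
    destruct (tree_eq_dec B Lf) as [->|HB]; [|apply eta_mul_x0i_rotate; tauto].
    destruct (in_dec Nat.eq_dec 0 (exposed Tp 0)) as [H0|H0]; [|apply eta_mul_x0i_rotate; tauto].
    destruct (exposed_base_split_first _ _ H0) as [U ->].
    destruct (tree_eq_dec C Lf) as [->|HC]; [|apply eta_mul_x0i_cancel; auto].
    rewrite leaves_split_first in HL. rewrite (leaves_two U) by (simpl in HL; lia).
    vm_compute. reflexivity.
Qed.

Theorem lemma4p4 : forall w : treepair, is_elt w -> good_edge w g0.
Proof. intros w Hw. apply good_edge_of_free_reduce, eta_mul_x0i; auto. Qed.
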